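(* Let $p\ge1$, $n,K\in\mathbb{N}$, $\Omega\subseteq\mathbb{R}^d$ compact and $z\in\mathbb{R}^d\setminus\Omega$. Let $f:G_{\le n}(\Omega)\to\mathbb{R}^m$ be an MPNN with $K$ message passing layers whose aggregation functions $\phi^{(k)}$, combine functions $\psi^{(k)}$ and readout $\upsilon$ are jointly continuous in inputs and parameters, with parameters in compact sets. Let $\Omega_k$ ($0\le k\le K$, $\Omega_0=\Omega$) be the set of all attainable features after $k$ layers (over all graphs, nodes and parameters), and let $z_k\notin\Omega_k$. Assume that for all $1\le k\le K$: $\phi^{(k)}$ is uniformly Lipschitz w.r.t. the augmented Wasserstein distance $W_1^{(z_{k-1})}$ on multisets of at most $n$ elements of $\Omega_{k-1}$; $\psi^{(k)}$ is uniformly Lipschitz w.r.t. the metric $\|x-x'\|_p+\|c-c'\|_p$ on pairs; and $\upsilon$ is uniformly Lipschitz w.r.t. $W_1^{(z_K)}$ on multisets of at most $n$ elements of $\Omega_K$. Then there are constants $C_1,C_2>0$ such that for all parameter choices: (1) for every $0\le k\le K$ and all nodes $u,v$ of graphs in $G_{\le n}(\Omega)$, $\|x_v^{(k)}-x_u^{(k)}\|_p^p\le C_1\,TD^p(T_v^{(k)},T_u^{(k)})$; (2) for all $G,\hat G\in G_{\le n}(\Omega)$ with graph embeddings $c^{\mathrm{global}},\hat c^{\mathrm{global}}$, $\|c^{\mathrm{global}}-\hat c^{\mathrm{global}}\|_p^p\le C_2\,TMD^{(K)}(G,\hat G)^p$.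
   Context: $G_{\le n}(\Omega)$ is the set of graphs $G=(V,E,X)$ with $|V|\le n$ and node features $x_v\in\Omega$; $\mathcal N_v$ is the multiset of neighbors of $v$. An MPNN of depth $K$ computes $x_v^{(0)}=x_v$ and, for $k=1,\dots,K$, $c_v^{(k)}=\phi^{(k)}(\{\!\!\{ x_u^{(k-1)}:u\in\mathcal N_v\}\!\!\})$, $x_v^{(k)}=\psi^{(k)}(x_v^{(k-1)},c_v^{(k)})$, and graph embedding $c^{\mathrm{global}}=\upsilon(\{\!\!\{ x_v^{(K)}:v\in V\}\!\!\})$. For multisets of vectors of at most $n$ elements, $W_1^{(z)}(S_1,S_2)=\min_{\tau\in S_n}\sum_j\|s_j-s'_{\tau(j)}\|_1$ after padding both with copies of $z$ to $n$ elements. A parametric function is uniformly Lipschitz if it is $L$-Lipschitz in its input for every parameter with a common $L$. Computation trees: $T_v^{(0)}$ is a single root node with feature $x_v$; $T_v^{(k)}$ is obtained from $T_v^{(k-1)}$ by attaching to each leaf (corresponding to a graph node $u$) children corresponding to the neighbors of $u$, each with its feature. The blank tree $\bar T_z$ is a single node with feature $z$. For a rooted tree $T$ with root $r$, $\mathcal T_r$ is the multiset of subtrees rooted at the children of $r$. For multisets of trees $A,B$ of size at most $n$, $W^{(\bar T_z)}_{TD,1}(A,B)=\min_{\tau\in S_n}\sum_{j=1}^n TD(A'_j,B'_{\tau(j)})$ with $A',B'$ padded by copies of $\bar T_z$ to $n$ elements. $TD(T_a,T_b)=\|x_a-x_b\|_p+W^{(\bar T_z)}_{TD,1}(\mathcal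 T_a,\mathcal T_b)$ if the maximal depth of $T_a,T_b$ is positive and $\|x_a-x_b\|_p$ otherwise ($x_a,x_b$ root features). The Tree Mover's Distance is $TMD^{(K)}(G,H)=W^{(\bar T_z)}_{TD,1}(\{\!\!\{ T_v^{(K)}:v\in V_G\}\!\!\},\{\!\!\{ T_u^{(K)}:u\in V_H\}\!\!\})$. *)

From HB Require Import structures.
From mathcomp Require Import all_boot all_order all_algebra fingroup perm.
From mathcomp Require Import all_classical all_reals all_analysis.

Set Implicit Arguments.
Unset Strict Implicit.
Unset Printing Implicit Defensive.

Import Order.TTheory GRing.Theory Num.Theory.
Local Open Scope classical_set_scope.
Local Open Scope ring_scope.

Section Defs.
Variable R : realType.

Definition pnorm (p : R) (d : nat) (x : 'rV[R]_d) : R :=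
  (\sum_(i < d) `|x ord0 i| `^ p) `^ p^-1.

Definition norm1 (d : nat) (x : 'rV[R]_d) : R := \sum_(i < d) `|x ord0 i|.

(* For multisets (given as sequences) A, B of at most n elements of T, a cost
   c and a padding element z: pad both with copies of z up to n elements and
   take the minimum over tau in S_n of sum_j c (A'_j) (B'_(tau j)). *)
Definition Wpad (T : Type) (c : T -> T -> R) (n : nat) (z : T)
    (A B : seq T) : R :=
  let cost := fun tau : 'S_n => \sum_(j < n) c (nth z A j) (nth z B (tau j)) in
  \big[Num.min/cost 1%g]_(tau : 'S_n) cost tau.

Definition W1 (n d : nat) (z : 'rV[R]_d) (A B : seq 'rV[R]_d) : R :=
  Wpad (fun s s' => norm1 (s - s')) n z A B.

Record graph (d : nat) := Graph {
  gN : nat;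
  gadj : rel 'I_gN;
  gx : 'I_gN -> 'rV[R]_d }.

Definition nbrs d (G : graph d) (v : 'I_(gN G)) : seq 'I_(gN G) :=
  [seq u <- enum 'I_(gN G) | @gadj _ G v u].
Arguments nbrs {d} G v.

Definition in_Gn d (n : nat) (Omega : set 'rV[R]_d) (G : graph d) : Prop :=
  [/\ (gN G <= n)%N,
      (forall u v, @gadj _ G u v = @gadj _ G v u),
      (forall v, ~~ @gadj _ G v v) &
      (forall v, Omega (@gx _ G v))].

Inductive ftree (T : Type) : Type := FNode of T & seq (ftree T).

Definition froot T (t : ftree T) : T := let: FNode x _ := t in x.
Definition fchildren T (t : ftree T) : seq (ftree T) :=
  let: FNode _ ts := t in ts.

Fixpoint fmap T U (f : T -> U) (t : ftree T) : ftree U :=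
  let: FNode x ts := t in FNode (f x) (map (fmap f) ts).

Fixpoint depth T (t : ftree T) : nat :=
  let: FNode _ ts := t in foldr (fun t' m => maxn (depth t').+1 m) 0%N ts.

Fixpoint grow d (G : graph d) (t : ftree 'I_(gN G)) : ftree 'I_(gN G) :=
  let: FNode u ts := t in
  if ts is [::] then FNode u [seq FNode w [::] | w <- nbrs G u]
  else FNode u (map (@grow d G) ts).

Definition comp_tree d (G : graph d) (k : nat) (v : 'I_(gN G))
  : ftree 'rV[R]_d :=
  fmap (@gx _ G) (iter k (@grow d G) (FNode v [::])).

Section TD.
Variables (p : R) (n d : nat) (z : 'rV[R]_d).

Definition blank_tree : ftree 'rV[R]_d := FNode z [::].

(* TD computed with a fuel argument; the recursion in the definition of TD
   only descends to pairs of strictly smaller maximal depth (children or blank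
   trees), so fuel = maximal depth of the two trees is enough (see TD). *)
Fixpoint TD_fuel (fuel : nat) (ta tb : ftree 'rV[R]_d) : R :=
  match fuel with
  | 0%N => pnorm p (froot ta - froot tb)
  | m.+1 =>
    if (0 < maxn (depth ta) (depth tb))%N then
      pnorm p (froot ta - froot tb)
      + Wpad (TD_fuel m) n blank_tree (fchildren ta) (fchildren tb)
    else pnorm p (froot ta - froot tb)
  end.

Definition TD (ta tb : ftree 'rV[R]_d) : R :=
  TD_fuel (maxn (depth ta) (depth tb)) ta tb.

Definition WTD (A B : seq (ftree 'rV[R]_d)) : R := Wpad TD n blank_tree A B.

Definition TMD (K : nat) (G H : graph d) : R :=
  WTD [seq @comp_tree d G K v | v <- enum 'I_(gN G)]
      [seq @comp_tree d H K u | u <- enum 'I_(gN H)].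
End TD.

(* An MPNN of depth K with parameter vector theta in 'rV[R]_q:
   dims k  = dimension of the node features after k layers (dims 0 = d),
   dc k    = dimension of the aggregated messages c^{(k)} (k >= 1),
   phi k theta : multiset (seq) of features of layer k-1 -> R^{dc k},
   psi k theta : R^{dims (k-1)} * R^{dc k} -> R^{dims k},
   ups theta   : multiset of layer-K features -> R^m. *)
Section MPNN.
Variables (q m K : nat) (dims dc : nat -> nat).
Variable phi : forall k : nat, 'rV[R]_q -> seq 'rV[R]_(dims k.-1) -> 'rV[R]_(dc k).
Variable psi : forall k : nat,
  'rV[R]_q -> 'rV[R]_(dims k.-1) -> 'rV[R]_(dc k) -> 'rV[R]_(dims k).
Variable ups : 'rV[R]_q -> seq 'rV[R]_(dims K) -> 'rV[R]_m.

Definition feat (theta : 'rV[R]_q) (G : graph (dims 0))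
  : forall k : nat, 'I_(gN G) -> 'rV[R]_(dims k) :=
  fix f (k : nat) : 'I_(gN G) -> 'rV[R]_(dims k) :=
  match k as k0 return 'I_(gN G) -> 'rV[R]_(dims k0) with
  | 0%N => @gx _ G
  | k'.+1 => fun v =>
      @psi k'.+1 theta (f k' v)
        (@phi k'.+1 theta [seq f k' u | u <- nbrs G v])
  end.

Definition cglob (theta : 'rV[R]_q) (G : graph (dims 0)) : 'rV[R]_m :=
  ups theta [seq @feat theta G K v | v <- enum 'I_(gN G)].

Definition Omega_k (n : nat) (Omega : set 'rV[R]_(dims 0))
    (Theta : set 'rV[R]_q) (k : nat) : set 'rV[R]_(dims k) :=
  match k as k0 return set 'rV[R]_(dims k0) with
  | 0%N => Omega
  | k'.+1 => [set y | exists (theta : 'rV[R]_q) (G : graph (dims 0))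
                         (v : 'I_(gN G)),
               [/\ Theta theta, in_Gn n Omega G & @feat theta G k'.+1 v = y]]
  end.
End MPNN.

Definition rows_seq (j d : nat) (X : 'M[R]_(j, d)) : seq 'rV[R]_d :=
  [seq row i X | i <- enum 'I_j].

End Defs.

Arguments nbrs {R d} G v.
Arguments comp_tree {R d} G k v.
Arguments feat {R q dims dc} phi psi theta G k v.
Arguments Omega_k {R q dims dc} phi psi n Omega Theta k _.
Arguments cglob {R q m K dims dc} phi psi ups theta G.

From Pilot Require Import Defs.
From HB Require Import structures.
From mathcomp Require Import all_boot all_order all_algebra fingroup perm.
From mathcomp Require Import all_classical all_reals all_analysis.
From mathcomp Require Import ring.
Import Order.TTheory GRing.Theory Num.Theory numFieldNormedType.Exports.
Local Open Scope classical_set_scope.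
Local Open Scope ring_scope.

(* Both bounds come from an induction on the layer [k] that carries two estimates: a Lipschitz
   bound [|x_v^(k) - x_u^(k)|_p <= L_k TD(T_v, T_u)], and a bound
   [|x_w^(k) - z_k|_1 <= B_k TD(T_w, blank)] against the blank tree. When the Lipschitz bound of
   [phi^(k+1)] is transported to the children, the matched entries of [W_1^(z_k)] are controlled
   by the first estimate and the padded ones by the second. The second follows from the first by
   comparing [w] with an isolated node, whose features stay bounded by compactness of the
   parameter set; the additive constant this creates is absorbed because
   [TD(T_w, blank) >= dist(z_0, Omega) > 0]. The readout is one more such step, and the [p]-th
   powers are taken at the very end. *)

Set Implicit Arguments.
Unset Strict Implicit.
Unset Printing Implicit Defensive.

Local Notation norm1 := Defs.norm1.
Local Notation froot := Defs.froot.

Section Norms.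
Variable R : realType.
Implicit Types (p : R) (d : nat).

Lemma pnorm_ge0 p d (x : 'rV[R]_d) : 0 <= pnorm p x.
Proof. exact: powR_ge0. Qed.

Lemma norm1_ge0 d (x : 'rV[R]_d) : 0 <= norm1 x.
Proof. exact: sumr_ge0. Qed.

Lemma pnorm0 p d : 0 < p -> pnorm p (0 : 'rV[R]_d) = 0.
Proof.
move=> p0; rewrite /pnorm big1 ?powR0 ?invr_eq0 ?gt_eqF // => i _.
by rewrite mxE normr0 powR0 // gt_eqF.
Qed.

Lemma norm10 d : norm1 (0 : 'rV[R]_d) = 0.
Proof. by rewrite /norm1 big1 // => i _; rewrite mxE normr0. Qed.

Lemma pnorm_distC p d (x y : 'rV[R]_d) : pnorm p (x - y) = pnorm p (y - x).
Proof. by congr (_ `^ _); apply: eq_bigr => i _; rewrite !mxE distrC. Qed.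

Lemma norm1_distC d (x y : 'rV[R]_d) : norm1 (x - y) = norm1 (y - x).
Proof. by apply: eq_bigr => i _; rewrite !mxE distrC. Qed.

Lemma norm1_distD d (x y w : 'rV[R]_d) :
  norm1 (x - w) <= norm1 (x - y) + norm1 (y - w).
Proof. by rewrite /norm1 -big_split; apply: ler_sum => i _; rewrite !mxE ler_distD. Qed.

Lemma ler_entry_sum d (F : 'I_d -> R) i : (forall j, 0 <= F j) -> F i <= \sum_j F j.
Proof. by move=> F0; rewrite (bigD1 i) //= lerDl sumr_ge0. Qed.

Lemma normr_entry_le_pnorm p d (x : 'rV[R]_d) i : 0 < p -> `|x ord0 i| <= pnorm p x.
Proof.
move=> p0; rewrite -[leLHS](powRr1 (normr_ge0 _)) -(mulfV (lt0r_neq0 p0)) powRrM.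
apply: ge0_ler_powR; rewrite ?nnegrE ?invr_ge0 ?(ltW p0) ?powR_ge0 ?sumr_ge0 //.
by apply: ler_entry_sum => j; rewrite powR_ge0.
Qed.

Lemma norm1_le_pnorm p d (x : 'rV[R]_d) : 0 < p -> norm1 x <= d%:R * pnorm p x.
Proof.
move=> p0; apply: le_trans (_ : \sum_(i < d) pnorm p x <= _).
  by apply: ler_sum => i _; apply: normr_entry_le_pnorm.
by rewrite sumr_const card_ord mulr_natl.
Qed.

Lemma pnorm_le_norm1 p d (x : 'rV[R]_d) : 1 <= p -> pnorm p x <= (d%:R + 1) * norm1 x.
Proof.
move=> p1; have p0 : 0 < p := lt_le_trans ltr01 p1.
set S := norm1 x; have S0 : 0 <= S := norm1_ge0 x.
have d1 : 1 <= d%:R + 1 :> R by rewrite lerDr.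
apply: le_trans (_ : ((d%:R + 1) * S `^ p) `^ p^-1 <= _).
  apply: ge0_ler_powR; rewrite ?nnegrE ?invr_ge0 ?(ltW p0) ?mulr_ge0 ?powR_ge0 ?sumr_ge0 //.
  apply: le_trans (_ : \sum_(i < d) S `^ p <= _).
    apply: ler_sum => i _; apply: ge0_ler_powR; rewrite ?nnegrE ?(ltW p0) //.
    by apply: ler_entry_sum.
  by rewrite sumr_const card_ord -(mulr_natl (S `^ p)) ler_wpM2r ?powR_ge0 ?lerDl.
rewrite powRM ?powR_ge0 ?(le_trans ler01) // -powRrM mulfV ?gt_eqF // powRr1 //.
rewrite ler_wpM2r // -{2}(powRr1 (le_trans ler01 d1)).
by apply: ler_powR; rewrite // invf_le1.
Qed.

Lemma pnorm_change_center p d (x w z : 'rV[R]_d) : 1 <= p ->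
  pnorm p (x - w) <= (d%:R + 1) ^+ 2 * pnorm p (x - z) + (d%:R + 1) * norm1 (z - w).
Proof.
move=> p1; have p0 : 0 < p := lt_le_trans ltr01 p1.
have D1 : 0 <= d%:R + 1 :> R by rewrite addr_ge0.
apply: le_trans (pnorm_le_norm1 _ p1) _.
rewrite expr2 -mulrA -mulrDr ler_wpM2l //.
apply: le_trans (norm1_distD x z w) _; rewrite lerD2r.
apply: le_trans (norm1_le_pnorm _ p0) _.
by rewrite ler_wpM2r ?pnorm_ge0 ?lerDl.
Qed.

Lemma normr_entry_le_mx_norm d (x : 'rV[R]_d) i : `|x ord0 i| <= `|x|.
Proof.
rewrite -[`|x|]/(mx_norm x) mx_normrE.
exact: (le_bigmax _ (fun ij => `|x ij.1 ij.2|) (ord0, i)).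
Qed.

Lemma norm1_le_mx_norm d (x : 'rV[R]_d) : norm1 x <= d%:R * `|x|.
Proof.
apply: le_trans (_ : \sum_(i < d) `|x| <= _).
  by apply: ler_sum => i _; apply: normr_entry_le_mx_norm.
by rewrite sumr_const card_ord mulr_natl.
Qed.

Lemma compact_pnorm_sep p d (A : set 'rV[R]_d) z : 0 < p -> compact A -> ~ A z ->
  exists2 e, 0 < e & forall x, A x -> e <= pnorm p (x - z).
Proof.
move=> p0 cA Az.
have : nbhs z (~` A).
  apply: open_nbhs_nbhs; split => //; apply: closed_openC.
  exact: compact_closed (@norm_hausdorff _ _) cA.
move/nbhs_ballP => [e /= e0 He]; exists e => // x Ax.
have : ~ ball z e x by move/He.
rewrite mx_norm_ball /ball_ /= => /negP; rewrite -leNgt => /le_trans; apply.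
rewrite -[`|_|]/(mx_norm _) mx_normrE; apply/bigmax_leP; split=> [|[i j] _ /=].
  exact: pnorm_ge0.
rewrite (ord1 i) !mxE distrC.
by have := normr_entry_le_pnorm (x - z) j p0; rewrite !mxE.
Qed.

End Norms.

Lemma nth_map2_cases (I T1 T2 : Type) (f : I -> T1) (g : I -> T2) z1 z2 (A : seq I) j :
  (exists a, nth z1 (map f A) j = f a /\ nth z2 (map g A) j = g a) \/
  (nth z1 (map f A) j = z1 /\ nth z2 (map g A) j = z2).
Proof.
elim: A j => [|a A IH] [|j] /=; try by right.
  by left; exists a.
exact: IH.
Qed.

Section Wasserstein.
Variables (R : realType) (n : nat).

Definition pad_cost (T : Type) (c : T -> T -> R) (z : T) (A B : seq T) (tau : 'S_n) : R :=
  \sum_(j < n) c (nth z A j) (nth z B (tau j)).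

Section Cost.
Variables (T : Type) (c : T -> T -> R) (z : T).

Lemma Wpad_le_cost A B tau : Wpad c n z A B <= pad_cost c z A B tau.
Proof. exact: bigmin_le. Qed.

Lemma Wpad_attained A B : exists tau, pad_cost c z A B tau <= Wpad c n z A B.
Proof.
have [tau _ Htau] := @Order.TotalTheory.arg_minP _ _ 'S_n 1%g xpredT (pad_cost c z A B) isT.
by exists tau; apply/bigmin_geP; split=> [|sigma _]; apply: Htau.
Qed.

Lemma Wpad_ge0 A B : (forall a b, 0 <= c a b) -> 0 <= Wpad c n z A B.
Proof.
move=> c0; have [tau Htau] := Wpad_attained A B.
by apply: le_trans Htau; apply: sumr_ge0.
Qed.

Lemma Wpad_nil : (forall a b, 0 <= c a b) -> c z z = 0 -> Wpad c n z [::] [::] = 0.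
Proof.
move=> c0 czz; apply/le_anti; rewrite Wpad_ge0 // andbT.
by apply: le_trans (Wpad_le_cost _ _ 1%g) _; rewrite /pad_cost big1 // => j _; rewrite !nth_nil.
Qed.

End Cost.

Lemma Wpad_flip_le (T : Type) (c : T -> T -> R) z A B :
  Wpad c n z A B <= Wpad (fun a b => c b a) n z B A.
Proof.
have [tau Htau] := Wpad_attained (fun a b => c b a) z B A.
apply: le_trans (Wpad_le_cost c z A B tau^-1) _; apply: le_trans Htau.
rewrite /pad_cost (reindex_inj (@perm_inj _ tau)) /=.
by under eq_bigr do rewrite permK.
Qed.

Lemma WpadC (T : Type) (c : T -> T -> R) z A B :
  Wpad c n z A B = Wpad (fun a b => c b a) n z B A.
Proof. by apply/le_anti; rewrite Wpad_flip_le (Wpad_flip_le (fun a b => c b a)). Qed.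

Lemma ler_Wpad_map (I1 I2 T1 T2 : Type) (f1 : I1 -> T1) (f2 : I2 -> T1)
    (g1 : I1 -> T2) (g2 : I2 -> T2) (c1 : T1 -> T1 -> R) (c2 : T2 -> T2 -> R)
    z1 z2 (C : R) (A1 : seq I1) (A2 : seq I2) :
  0 <= C ->
  (forall a b, c1 (f1 a) (f2 b) <= C * c2 (g1 a) (g2 b)) ->
  (forall a, c1 (f1 a) z1 <= C * c2 (g1 a) z2) ->
  (forall b, c1 z1 (f2 b) <= C * c2 z2 (g2 b)) ->
  c1 z1 z1 <= C * c2 z2 z2 ->
  Wpad c1 n z1 (map f1 A1) (map f2 A2) <= C * Wpad c2 n z2 (map g1 A1) (map g2 A2).
Proof.
move=> C0 cff cfz czf czz; have [tau Htau] := Wpad_attained c2 z2 (map g1 A1) (map g2 A2).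
apply: le_trans (Wpad_le_cost _ _ _ _ tau) (le_trans _ (ler_wpM2l C0 Htau)).
rewrite /pad_cost mulr_sumr; apply: ler_sum => j _.
case: (nth_map2_cases f1 g1 z1 z2 A1 j) => [[a [-> ->]]|[-> ->]];
case: (nth_map2_cases f2 g2 z1 z2 A2 (tau j)) => [[b [-> ->]]|[-> ->]] //.
Qed.

Lemma eq_Wpad (T : Type) (c1 c2 : T -> T -> R) (z : T) A B :
  (forall j j' : 'I_n, c1 (nth z A j) (nth z B j') = c2 (nth z A j) (nth z B j')) ->
  Wpad c1 n z A B = Wpad c2 n z A B.
Proof.
move=> c12; have E tau : pad_cost c1 z A B tau = pad_cost c2 z A B tau.
  by apply: eq_bigr => j _; apply: c12.
have [tau1 H1] := Wpad_attained c1 z A B; have [tau2 H2] := Wpad_attained c2 z A B.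
apply/le_anti; rewrite (le_trans (Wpad_le_cost _ _ _ _ tau2)) ?E //.
by rewrite (le_trans (Wpad_le_cost _ _ _ _ tau1)) -?E.
Qed.

End Wasserstein.

Lemma depth_nth_child_lt T (x : T) ts b j : (j < size ts)%N ->
  (depth (nth b ts j) < depth (FNode x ts))%N.
Proof.
elim: ts j => //= a ts IH [|j] /=; first by rewrite leq_max leqnn.
by move=> /IH /= lt_j; rewrite leq_max lt_j orbT.
Qed.

Lemma depth_nth_children T (t : ftree T) b j : depth b = 0%N ->
  (depth (nth b (fchildren t) j) <= (depth t).-1)%N.
Proof.
case: t => x ts b0 /=; case: (ltnP j (size ts)) => jts; last by rewrite nth_default // b0.
by have := depth_nth_child_lt x b jts; rewrite /=; case: (foldr _ _ _).
Qed.

Lemma depth0_children T (t : ftree T) : depth t = 0%N -> fchildren t = [::].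
Proof. by case: t => x [|a l] //= /eqP; rewrite -leqn0 geq_max ltn0. Qed.

Section TreeDistance.
Variables (R : realType) (p : R) (n d : nat) (z : 'rV[R]_d).
Hypothesis p0 : 0 < p.
Local Notation TD := (TD p n z).
Local Notation blank := (blank_tree z).

Lemma TD_fuel_ge0 f a b : 0 <= TD_fuel p n z f a b.
Proof.
elim: f a b => [|f IH] a b /=; first exact: pnorm_ge0.
by case: ifP => _; rewrite ?addr_ge0 ?pnorm_ge0 ?Wpad_ge0.
Qed.

Lemma TD_ge0 a b : 0 <= TD a b.
Proof. exact: TD_fuel_ge0. Qed.

Lemma depth_nth_children_blank (t : ftree 'rV[R]_d) j f :
  (depth t <= f.+1)%N -> (depth (nth blank (fchildren t) j) <= f)%N.
Proof. by move=> tf; apply: leq_trans (depth_nth_children t j _) _; case: (depth t) tf. Qed.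

Lemma TD_fuel_irr f f' a b : (maxn (depth a) (depth b) <= f)%N ->
  (maxn (depth a) (depth b) <= f')%N -> TD_fuel p n z f a b = TD_fuel p n z f' a b.
Proof.
elim: f f' a b => [|f IH] [|f'] a b abf abf' //=; rewrite ?ltnNge ?abf ?abf' //.
case: ifP => // _; congr (_ + _); apply: eq_Wpad => j j'.
move: abf abf'; rewrite !geq_max => /andP [af bf] /andP [af' bf'].
by apply: IH; rewrite geq_max ?depth_nth_children_blank.
Qed.

Lemma TDE a b :
  TD a b = pnorm p (froot a - froot b) + Wpad TD n blank (fchildren a) (fchildren b).
Proof.
rewrite {1}/TD; case ab: (maxn (depth a) (depth b)) => [|f] /=.
  move/eqP: ab; rewrite -leqn0 geq_max !leqn0.
  move=> /andP [/eqP/depth0_children -> /eqP/depth0_children ->].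
  rewrite Wpad_nil ?addr0 //; first by move=> ? ?; apply: TD_ge0.
  by rewrite /TD /= subrr pnorm0.
rewrite ab /=; congr (_ + _); apply: eq_Wpad => j j'.
move/eqP: ab; rewrite eqn_leq geq_max => /andP [/andP [af bf] _].
by apply: TD_fuel_irr; rewrite // geq_max !depth_nth_children_blank.
Qed.

Lemma TDC a b : TD a b = TD b a.
Proof.
suff fuelC f : TD_fuel p n z f a b = TD_fuel p n z f b a by rewrite /TD maxnC fuelC.
elim: f a b => [|f IH] a b /=; first exact: pnorm_distC.
rewrite maxnC pnorm_distC; case: ifP => // _; congr (_ + _).
by rewrite WpadC; apply: eq_Wpad => j j'.
Qed.

Lemma pnorm_root_le_TD a b : pnorm p (froot a - froot b) <= TD a b.
Proof. by rewrite TDE lerDl Wpad_ge0 // => ? ?; apply: TD_ge0. Qed.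

Lemma Wpad_children_le_TD a b : Wpad TD n blank (fchildren a) (fchildren b) <= TD a b.
Proof. by rewrite TDE lerDr pnorm_ge0. Qed.

Lemma TD_leaf_le_TD_blank (t : ftree 'rV[R]_d) (w : 'rV[R]_d) : 1 <= p ->
  TD t (FNode w [::]) <= (d%:R + 1) ^+ 2 * TD t blank + (d%:R + 1) * norm1 (z - w).
Proof.
move=> p1; rewrite !TDE /= mulrDr addrAC lerD ?pnorm_change_center //.
rewrite ler_peMl ?Wpad_ge0 // => [? ?|]; first exact: TD_ge0.
by rewrite expr_ge1 // lerDr.
Qed.

End TreeDistance.

Section ComputationTrees.
Variables (R : realType) (d : nat) (G : graph R d).

Lemma iter_grow_leafS k v : iter k.+1 (@grow R d G) (FNode v [::]) =
  FNode v [seq iter k (@grow R d G) (FNode w [::]) | w <- nbrs G v].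
Proof.
elim: k => [|k IH] //; rewrite iterS IH.
by case E: (nbrs G v) => [|a l] /=; rewrite ?E // -map_comp.
Qed.

Lemma comp_tree_root k v : froot (comp_tree G k v) = gx v.
Proof. by case: k => [|k] //; rewrite /comp_tree iter_grow_leafS. Qed.

Lemma comp_tree_children k v :
  fchildren (comp_tree G k.+1 v) = [seq comp_tree G k w | w <- nbrs G v].
Proof. by rewrite /comp_tree iter_grow_leafS /= -map_comp. Qed.

Lemma comp_tree_isolated k v : nbrs G v = [::] -> comp_tree G k v = FNode (gx v) [::].
Proof. by move=> Nv; case: k => [|k] //; rewrite /comp_tree iter_grow_leafS Nv. Qed.

Lemma size_nbrs v : (size (nbrs G v) <= gN G)%N.
Proof. by rewrite size_filter (leq_trans (count_size _ _)) // size_enum_ord. Qed.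

End ComputationTrees.

Lemma continuous_pair (T U V : topologicalType) (f : T -> U) (g : T -> V) x :
  {for x, continuous f} -> {for x, continuous g} -> {for x, continuous (fun y => (f y, g y))}.
Proof. exact: cvg_pair. Qed.

Lemma rows_seq0 (R : realType) d (X : 'M[R]_(0, d)) : rows_seq X = [::].
Proof. by rewrite /rows_seq; case: (enum _) (size_enum_ord 0). Qed.

Lemma le_affine_absorb (R : realType) (X T a b delta : R) : 0 < delta -> delta <= T ->
  0 <= b -> X <= a * T + b -> X <= (a + b / delta) * T.
Proof.
move=> delta0 deltaT b0 XaTb; apply: le_trans XaTb _; rewrite mulrDl lerD2l.
rewrite -{1}(divfK (lt0r_neq0 delta0) b).
by apply: ler_wpM2l; rewrite ?divr_ge0 ?(ltW delta0).
Qed.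

Lemma powR_le_scale (R : realType) (p X T c : R) : 0 < p -> 0 <= X -> 0 <= T -> 0 <= c ->
  X <= c * T -> X `^ p <= (c + 1) `^ p * T `^ p.
Proof.
move=> p0 X0 T0 c0 XcT; rewrite -powRM ?addr_ge0 //.
apply: ge0_ler_powR; rewrite ?nnegrE ?(ltW p0) ?mulr_ge0 ?addr_ge0 //.
by apply: le_trans XcT _; rewrite ler_wpM2r ?lerDl.
Qed.

Section MPNNStability.
Unset Implicit Arguments.
Variables (R : realType) (p : R) (n K q m : nat) (dims dc : nat -> nat)
  (Omega : set 'rV[R]_(dims 0%N)) (Theta : set 'rV[R]_q)
  (phi : forall k : nat, 'rV[R]_q -> seq 'rV[R]_(dims k.-1) -> 'rV[R]_(dc k))
  (psi : forall k : nat,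
     'rV[R]_q -> 'rV[R]_(dims k.-1) -> 'rV[R]_(dc k) -> 'rV[R]_(dims k))
  (ups : 'rV[R]_q -> seq 'rV[R]_(dims K) -> 'rV[R]_m)
  (zs : forall k : nat, 'rV[R]_(dims k)).
Set Implicit Arguments.
Hypothesis p1 : 1 <= p.
Hypothesis Theta_compact : compact Theta.
Hypothesis phi_cont : forall k : nat, (0 < k <= K)%N -> forall j : nat, (j <= n)%N ->
  continuous (fun x : 'rV[R]_q * 'M[R]_(j, dims k.-1) => phi k x.1 (rows_seq x.2)).
Hypothesis psi_cont : forall k : nat, (0 < k <= K)%N ->
  continuous (fun x : 'rV[R]_q * ('rV[R]_(dims k.-1) * 'rV[R]_(dc k)) =>
                psi k x.1 x.2.1 x.2.2).

Let p0 : 0 < p. Proof. exact: lt_le_trans p1. Qed.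

Local Notation feat := (feat phi psi).
Local Notation Omega_k := (Omega_k phi psi n Omega Theta).
Local Notation TD := (TD p n (zs 0%N)).
Local Notation blank := (blank_tree (zs 0%N)).

Lemma featS th (G : graph R (dims 0%N)) k v : feat th G k.+1 v =
  psi k.+1 th (feat th G k v) (phi k.+1 th [seq feat th G k u | u <- nbrs G v]).
Proof. by []. Qed.

Definition point_graph (w : 'rV[R]_(dims 0%N)) : graph R (dims 0%N) :=
  @Graph R (dims 0%N) 1 (fun _ _ => false) (fun _ => w).

Lemma point_graph_nbrs w (v : 'I_1) : nbrs (point_graph w) v = [::].
Proof. by rewrite /nbrs; elim: (enum _). Qed.

Lemma point_feat_continuous w k : (k <= K)%N ->
  continuous (fun th => feat th (point_graph w) k ord0).
Proof.
elim: k => [|k IH] kK th; first exact: cst_continuous.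
have phi0 : {for th, continuous (fun th => phi k.+1 th [::])}.
  have -> : (fun th => phi k.+1 th [::]) =
      (fun x => phi k.+1 x.1 (rows_seq x.2)) \o (fun th => (th, 0 : 'M[R]_(0, dims k))).
    by apply: funext => th' /=; rewrite rows_seq0.
  have pair0 : {for th, continuous (fun th : 'rV[R]_q => (th, 0 : 'M[R]_(0, dims k)))}.
    exact: continuous_pair (@cvg_id _ _) (@cst_continuous _ _ _ th).
  exact: continuous_comp pair0 (@phi_cont k.+1 kK 0 (leq0n n) (th, 0)).
have -> : (fun th => feat th (point_graph w) k.+1 ord0) =
    (fun x => psi k.+1 x.1 x.2.1 x.2.2) \o
    (fun th => (th, (feat th (point_graph w) k ord0, phi k.+1 th [::]))).
  by apply: funext => th' /=; rewrite point_graph_nbrs.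
apply: continuous_comp; last exact: (@psi_cont k.+1 kK).
exact: continuous_pair (@cvg_id _ _) (continuous_pair (IH (ltnW kK) th) phi0).
Qed.

Lemma point_feat_bounded w k : (k <= K)%N -> exists2 M, 0 <= M &
  forall th, Theta th -> norm1 (feat th (point_graph w) k ord0 - zs k) <= M.
Proof.
move=> kK; have cont : {within Theta, continuous (fun th => feat th (point_graph w) k ord0)}.
  exact/continuous_subspaceT/point_feat_continuous.
have [M [_ HM]] := compact_bounded (continuous_compact cont Theta_compact).
exists ((dims k)%:R * (`|M + 1| + `|zs k|)); first by rewrite mulr_ge0 ?addr_ge0.
move=> th Th; apply: le_trans (norm1_le_mx_norm _) _; rewrite ler_wpM2l //.
apply: le_trans (ler_normB _ _) _; rewrite lerD2r (le_trans _ (ler_norm _)) //.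
by apply: (HM (M + 1)); rewrite ?ltrDl //; exists th.
Qed.

Lemma feat_in_Omega_k th (G : graph R (dims 0%N)) k v :
  Theta th -> in_Gn n Omega G -> Omega_k k (feat th G k v).
Proof.
case: k => [|k] Th HG; last by exists th, G, v.
by case: HG => _ _ _; apply.
Qed.

Lemma map_feat_in_Omega_k th (G : graph R (dims 0%N)) k (A : seq 'I_(gN G)) :
  Theta th -> in_Gn n Omega G -> forall x, x \in map (feat th G k) A -> Omega_k k x.
Proof. by move=> Th HG x /mapP [u _ ->]; apply: feat_in_Omega_k. Qed.

Lemma size_map_nbrs_le th (G : graph R (dims 0%N)) k v :
  in_Gn n Omega G -> (size [seq feat th G k u | u <- nbrs G v] <= n)%N.
Proof. by case=> Gn _ _ _; rewrite size_map (leq_trans (size_nbrs v)). Qed.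

(* Computation trees deeper than the layer are allowed: the step from layer [k] to [k + 1]
   compares layer-[k] features with the depth-[k + 1] trees. *)
Definition feat_TD_lipschitz k (L : R) := forall th, Theta th ->
  forall G H : graph R (dims 0%N), in_Gn n Omega G -> in_Gn n Omega H ->
  forall (v : 'I_(gN G)) (u : 'I_(gN H)) j, (k <= j)%N ->
  pnorm p (feat th G k v - feat th H k u) <= L * TD (comp_tree G j v) (comp_tree H j u).

Definition feat_blank_bounded k (B : R) := forall th, Theta th ->
  forall G : graph R (dims 0%N), in_Gn n Omega G -> forall (w : 'I_(gN G)) j, (k <= j)%N ->
  norm1 (feat th G k w - zs k) <= B * TD (comp_tree G j w) blank.

Lemma feat_TD_lipschitz0 : feat_TD_lipschitz 0 1.
Proof.
move=> th _ G H _ _ v u j _; rewrite mul1r.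
have := pnorm_root_le_TD n (zs 0%N) p0 (comp_tree G j v) (comp_tree H j u).
by rewrite !comp_tree_root.
Qed.

Lemma feat_TD_lipschitz_le k L L' : L <= L' -> feat_TD_lipschitz k L -> feat_TD_lipschitz k L'.
Proof.
move=> LL' featL th Th G H HG HH v u j kj; apply: le_trans (featL th Th G H HG HH v u j kj) _.
by rewrite ler_wpM2r ?TD_ge0.
Qed.

Lemma W1_feat_le_Wpad_TD k L B th (G H : graph R (dims 0%N))
    (A : seq 'I_(gN G)) (A' : seq 'I_(gN H)) j :
  0 <= L -> 0 <= B -> feat_TD_lipschitz k L -> feat_blank_bounded k B ->
  Theta th -> in_Gn n Omega G -> in_Gn n Omega H -> (k <= j)%N ->
  W1 n (zs k) (map (feat th G k) A) (map (feat th H k) A') <=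
  ((dims k)%:R * L + B) * Wpad TD n blank (map (comp_tree G j) A) (map (comp_tree H j) A').
Proof.
move=> L0 B0 featL featB Th HG HH kj; have TD0 := TD_ge0 p n (zs 0%N).
have LB : (dims k)%:R * L <= (dims k)%:R * L + B by rewrite lerDl.
have BLB : B <= (dims k)%:R * L + B by rewrite lerDr mulr_ge0.
apply: ler_Wpad_map => [|a b|a|b|]; first by rewrite addr_ge0 ?mulr_ge0.
- apply: le_trans (norm1_le_pnorm _ p0) _.
  apply: le_trans (ler_wpM2l _ (featL th Th G H HG HH a b j kj)) _ => //.
  by rewrite mulrA ler_wpM2r.
- by apply: le_trans (featB th Th G HG a j kj) _; rewrite ler_wpM2r.
- rewrite norm1_distC TDC; apply: le_trans (featB th Th H HH b j kj) _.
  by rewrite ler_wpM2r.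
- by rewrite subrr norm10 mulr_ge0 ?addr_ge0 ?mulr_ge0.
Qed.

Hypothesis Omega_compact : compact Omega.
Hypothesis z0_notin_Omega : ~ Omega (zs 0%N).

Lemma feat_blank_bounded_of_lipschitz k L : (k <= K)%N -> 0 <= L ->
  feat_TD_lipschitz k L -> exists2 B, 0 <= B & feat_blank_bounded k B.
Proof.
move=> kK L0 featL.
have [[w0 [Ow0 n0]]|no_node] := pselect (exists w0, Omega w0 /\ (0 < n)%N); last first.
  exists 0 => // th _ G [Gn _ _ GOmega] w; exfalso; apply: no_node.
  exists (gx w); split; first exact: GOmega.
  exact: leq_ltn_trans (leq0n w) (leq_trans (ltn_ord w) Gn).
have [delta delta0 sep] := compact_pnorm_sep p0 Omega_compact z0_notin_Omega.
have [M M0 featM] := point_feat_bounded w0 kK.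
have point_in : in_Gn n Omega (point_graph w0) by split.
set d0 := (dims 0%N)%:R : R; set dk := (dims k)%:R : R; set N0 := norm1 (zs 0%N - w0).
set a := dk * L * (d0 + 1) ^+ 2; set b := dk * L * ((d0 + 1) * N0) + M.
have b0 : 0 <= b by rewrite addr_ge0 ?mulr_ge0 ?addr_ge0 ?norm1_ge0.
have a0 : 0 <= a by rewrite !mulr_ge0 ?exprn_ge0 ?addr_ge0.
exists (a + b / delta); first by rewrite addr_ge0 ?divr_ge0 ?(ltW delta0).
move=> th Th G HG w j kj; set t := comp_tree G j w.
have far : delta <= TD t blank.
  apply: le_trans (sep _ _) (le_trans _ (pnorm_root_le_TD n (zs 0%N) p0 t blank)).
    by case: HG => _ _ _; apply.
  by rewrite /t comp_tree_root.
apply: (le_affine_absorb delta0 far b0).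
set r := feat th (point_graph w0) k ord0.
apply: le_trans (norm1_distD _ r _) _; rewrite /b addrA lerD ?featM //.
apply: le_trans (norm1_le_pnorm _ p0) _.
have := featL th Th G (point_graph w0) HG point_in w ord0 j kj.
rewrite (comp_tree_isolated _ (point_graph_nbrs _ _)) => /le_trans lip.
apply: le_trans (_ : dk * (L * ((d0 + 1) ^+ 2 * TD t blank + (d0 + 1) * N0)) <= _).
  by apply: ler_wpM2l => //; apply: lip; rewrite ler_wpM2l ?TD_leaf_le_TD_blank.
by rewrite [leLHS](_ : _ = a * TD t blank + dk * L * ((d0 + 1) * N0)) // /a; ring.
Qed.

Hypothesis phi_lip : forall k : nat, (k < K)%N -> exists L : R, forall theta, Theta theta ->
  forall s t : seq 'rV[R]_(dims k),
    (size s <= n)%N -> (size t <= n)%N ->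
    (forall x, x \in s -> Omega_k k x) -> (forall x, x \in t -> Omega_k k x) ->
    pnorm p (phi k.+1 theta s - phi k.+1 theta t) <= L * W1 n (zs k) s t.
Hypothesis psi_lip : forall k : nat, (0 < k <= K)%N -> exists L : R, forall theta, Theta theta ->
  forall x x' c c',
    pnorm p (psi k theta x c - psi k theta x' c') <= L * (pnorm p (x - x') + pnorm p (c - c')).

Lemma feat_TD_lipschitzS k L : (k < K)%N -> 0 <= L -> feat_TD_lipschitz k L ->
  exists2 L', 0 <= L' & feat_TD_lipschitz k.+1 L'.
Proof.
move=> kK L0 featL; have [B B0 featB] := feat_blank_bounded_of_lipschitz (ltnW kK) L0 featL.
have [Lphi phiL] := phi_lip kK; have [Lpsi psiL] := @psi_lip k.+1 kK.
set C := (dims k)%:R * L + B; have C0 : 0 <= C by rewrite addr_ge0 ?mulr_ge0.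
exists (`|Lpsi| * (L + `|Lphi| * C)); first by rewrite !mulr_ge0 ?addr_ge0 ?mulr_ge0.
move=> th Th G H HG HH v u [//|j] kj; rewrite !featS.
apply: le_trans (psiL th Th _ _ _ _) _.
apply: le_trans (ler_wpM2r (addr_ge0 (pnorm_ge0 _ _) (pnorm_ge0 _ _)) (ler_norm Lpsi)) _.
rewrite -mulrA ler_wpM2l // mulrDl lerD ?featL 1?ltnW //.
apply: le_trans (phiL th Th _ _ (size_map_nbrs_le _ _ _ HG) (size_map_nbrs_le _ _ _ HH)
  (map_feat_in_Omega_k Th HG) (map_feat_in_Omega_k Th HH)) _.
have W0 : 0 <= W1 n (zs k) [seq feat th G k w | w <- nbrs G v] [seq feat th H k w | w <- nbrs H u].
  by apply: Wpad_ge0 => ? ?; apply: norm1_ge0.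
apply: le_trans (ler_wpM2r W0 (ler_norm Lphi)) _; rewrite -mulrA ler_wpM2l //.
apply: le_trans (W1_feat_le_Wpad_TD _ _ L0 B0 featL featB Th HG HH kj) _.
by rewrite ler_wpM2l // -!comp_tree_children Wpad_children_le_TD.
Qed.

Lemma feat_TD_lipschitz_uniform :
  exists2 L, 0 <= L & forall k, (k <= K)%N -> feat_TD_lipschitz k L.
Proof.
suff /(_ K (leqnn K)) : forall K', (K' <= K)%N ->
    exists2 L, 0 <= L & forall k, (k <= K')%N -> feat_TD_lipschitz k L by [].
elim=> [_|K' IH K'K].
  by exists 1 => // k; rewrite leqn0 => /eqP ->; apply: feat_TD_lipschitz0.
have [L L0 featL] := IH (ltnW K'K).
have [L' L'0 featL'] := feat_TD_lipschitzS K'K L0 (featL K' (leqnn K')).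
exists (Num.max L L'); first by rewrite le_max L0.
move=> k; rewrite leq_eqVlt => /orP [/eqP -> | kK'].
  by apply: feat_TD_lipschitz_le featL'; rewrite le_max lexx orbT.
by apply: feat_TD_lipschitz_le (featL k kK'); rewrite le_max lexx.
Qed.

Hypothesis ups_lip : exists L : R, forall theta, Theta theta ->
  forall s t : seq 'rV[R]_(dims K),
    (size s <= n)%N -> (size t <= n)%N ->
    (forall x, x \in s -> Omega_k K x) -> (forall x, x \in t -> Omega_k K x) ->
    pnorm p (ups theta s - ups theta t) <= L * W1 n (zs K) s t.

Lemma cglob_TMD_lipschitz : exists2 C, 0 <= C & forall th, Theta th ->
  forall G H : graph R (dims 0%N), in_Gn n Omega G -> in_Gn n Omega H ->
  pnorm p (cglob phi psi ups th G - cglob phi psi ups th H) <= C * TMD p n (zs 0%N) K G H.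
Proof.
have [L L0 featL] := feat_TD_lipschitz_uniform.
have [B B0 featB] := feat_blank_bounded_of_lipschitz (leqnn K) L0 (featL K (leqnn K)).
have [Lups upsL] := ups_lip.
exists (`|Lups| * ((dims K)%:R * L + B)); first by rewrite !mulr_ge0 ?addr_ge0 ?mulr_ge0.
move=> th Th G H HG HH.
have size_le (F : graph R (dims 0%N)) : in_Gn n Omega F ->
    (size [seq feat th F K v | v <- enum 'I_(gN F)] <= n)%N.
  by case=> Fn _ _ _; rewrite size_map size_enum_ord.
apply: le_trans (upsL th Th _ _ (size_le G HG) (size_le H HH)
  (map_feat_in_Omega_k Th HG) (map_feat_in_Omega_k Th HH)) _.
have W0 : 0 <= W1 n (zs K) [seq feat th G K v | v <- enum 'I_(gN G)]
    [seq feat th H K v | v <- enum 'I_(gN H)].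
  by apply: Wpad_ge0 => ? ?; apply: norm1_ge0.
apply: le_trans (ler_wpM2r W0 (ler_norm Lups)) _; rewrite -mulrA ler_wpM2l //.
exact: (W1_feat_le_Wpad_TD _ _ L0 B0 (featL K (leqnn K)) featB Th HG HH (leqnn K)).
Qed.

End MPNNStability.

Theorem mainTheorem12 (R : realType) (p : R) (n K q m : nat)
  (dims dc : nat -> nat)
  (Omega : set 'rV[R]_(dims 0%N)) (Theta : set 'rV[R]_q)
  (phi : forall k : nat, 'rV[R]_q -> seq 'rV[R]_(dims k.-1) -> 'rV[R]_(dc k))
  (psi : forall k : nat,
     'rV[R]_q -> 'rV[R]_(dims k.-1) -> 'rV[R]_(dc k) -> 'rV[R]_(dims k))
  (ups : 'rV[R]_q -> seq 'rV[R]_(dims K) -> 'rV[R]_m)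
  (zs : forall k : nat, 'rV[R]_(dims k)) :
  1 <= p ->
  compact Omega ->
  compact Theta ->
  (* aggregation and readout are functions of multisets *)
  (forall k theta s t, perm_eq s t -> phi k theta s = phi k theta t) ->
  (forall theta s t, perm_eq s t -> ups theta s = ups theta t) ->
  (* joint continuity in inputs and parameters *)
  (forall k : nat, (0 < k <= K)%N -> forall j : nat, (j <= n)%N ->
     continuous (fun x : 'rV[R]_q * 'M[R]_(j, dims k.-1) =>
                   phi k x.1 (rows_seq x.2))) ->
  (forall k : nat, (0 < k <= K)%N ->
     continuous (fun x : 'rV[R]_q * ('rV[R]_(dims k.-1) * 'rV[R]_(dc k)) =>
                   psi k x.1 x.2.1 x.2.2)) ->
  (forall j : nat, (j <= n)%N ->
     continuous (fun x : 'rV[R]_q * 'M[R]_(j, dims K) =>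
                   ups x.1 (rows_seq x.2))) ->
  (* z = z_0 not in Omega = Omega_0, and z_k not in Omega_k *)
  (forall k : nat, (k <= K)%N -> ~ Omega_k phi psi n Omega Theta k (zs k)) ->
  (* phi^(k+1) uniformly Lipschitz w.r.t. W_1^(z_k) on multisets of at most
     n elements of Omega_k *)
  (forall k : nat, (k < K)%N -> exists L : R, forall theta, Theta theta ->
     forall s t : seq 'rV[R]_(dims k),
       (size s <= n)%N -> (size t <= n)%N ->
       (forall x, x \in s -> Omega_k phi psi n Omega Theta k x) ->
       (forall x, x \in t -> Omega_k phi psi n Omega Theta k x) ->
       pnorm p (phi k.+1 theta s - phi k.+1 theta t) <= L * W1 n (zs k) s t) ->
  (* psi^(k) uniformly Lipschitz w.r.t. ||x - x'||_p + ||c - c'||_p *)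
  (forall k : nat, (0 < k <= K)%N -> exists L : R, forall theta, Theta theta ->
     forall x x' c c',
       pnorm p (psi k theta x c - psi k theta x' c')
         <= L * (pnorm p (x - x') + pnorm p (c - c'))) ->
  (* readout uniformly Lipschitz w.r.t. W_1^(z_K) *)
  (exists L : R, forall theta, Theta theta ->
     forall s t : seq 'rV[R]_(dims K),
       (size s <= n)%N -> (size t <= n)%N ->
       (forall x, x \in s -> Omega_k phi psi n Omega Theta K x) ->
       (forall x, x \in t -> Omega_k phi psi n Omega Theta K x) ->
       pnorm p (ups theta s - ups theta t) <= L * W1 n (zs K) s t) ->
  exists C1 C2 : R, [/\ 0 < C1, 0 < C2 &
    forall theta, Theta theta ->
    (forall k : nat, (k <= K)%N ->
       forall G H : graph R (dims 0%N), in_Gn n Omega G -> in_Gn n Omega H ->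
       forall (v : 'I_(gN G)) (u : 'I_(gN H)),
         pnorm p (feat phi psi theta G k v - feat phi psi theta H k u) `^ p
           <= C1 * TD p n (zs 0%N) (comp_tree G k v) (comp_tree H k u) `^ p)
    /\
    (forall G H : graph R (dims 0%N), in_Gn n Omega G -> in_Gn n Omega H ->
       pnorm p (cglob phi psi ups theta G - cglob phi psi ups theta H) `^ p
         <= C2 * TMD p n (zs 0%N) K G H `^ p)].
Proof.
move=> p1 Omega_compact Theta_compact _ _ phi_cont psi_cont _ zs_out phi_lip psi_lip ups_lip.
have p0 : 0 < p := lt_le_trans ltr01 p1.
have z0_out : ~ Omega (zs 0%N) := zs_out 0%N (leq0n K).
have [L L0 featL] := feat_TD_lipschitz_uniform p1 Theta_compact phi_cont psi_cont
  Omega_compact z0_out phi_lip psi_lip.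
have [C C0 cglobC] := cglob_TMD_lipschitz p1 Theta_compact phi_cont psi_cont
  Omega_compact z0_out phi_lip psi_lip ups_lip.
exists ((L + 1) `^ p), ((C + 1) `^ p); split; rewrite ?powR_gt0 ?ltr_wpDl //.
move=> th Th; split=> [k kK G H HG HH v u|G H HG HH]; apply: powR_le_scale;
  rewrite ?pnorm_ge0 ?TD_ge0 ?Wpad_ge0 //; first exact: featL.
  by move=> ? ?; apply: TD_ge0.
exact: cglobC.
Qed.
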